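(* In the inverse active sensing setting described in the context, the posterior over strategies given the data $\mathcal{D}$ satisfies $$\mathbb{P}\{\pi^\kappa_\rho(\cdot;\eta)\mid\mathcal{D}\}\ \propto\ \mathbb{P}\{\kappa\}\,\mathbb{P}\{\eta\mid\kappa\}\,\mathbb{P}\{\rho\}\prod_{n=1}^N\prod_{t=0}^{\tau_n-1}\pi^\kappa_\rho(\tilde\lambda_{n,t}\mid\mu_{n,t},\nu_{n,t};\eta),$$ where $\mu_{n,t}$ is computed recursively from the known prior $\mu_{n,0}$ of episode $n$ via the update $M$, and $\nu_{n,t}=1$ prior to stopping; in particular the problem dynamics ($p$ and $q$) drop out of the posterior.
   Context: Timely decision problem: finite sets $\Theta$ (decisions), $\Lambda$ (acquisitions), $\Omega$ (outcomes); known distributions $q_{\theta,\lambda}$ on $\Omega$ and constants $p_{\theta,\lambda}\in(0,1)$. In an episode a latent $\theta\sim\mu_0$ (known); survival $\nu_0=1$; at each time $t$ with $\nu_t=1$ the agent chooses $\tilde\lambda_t\in\Lambda\cup\Theta$, either an acquisition $\lambda_t\in\Lambda$ or a terminating decision $\hat\theta\in\Theta$. After an acquisition, given $\theta$, $\nu_{t+1}=0$ (deadline, after which nothing happens; outcome recorded as $\varnothing$) with probability $p_{\theta,\lambda_t}$, otherwise $\nu_{t+1}=1$ and outcome $\omega_{t+1}\sim q_{\theta,\lambda_t}$ is observed. $\tau$ is the episode's stopping time. The posterior is updated by $M(\lambda,\mu,\omega)(\theta)\propto(1-p_{\theta,\lambda})q_{\theta,\lambda}(\omega)\mu(\theta)$.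 Strategies: let $\mathcal K$ be a set of sensing criteria and $\mathcal H=\mathbb{R}^d$ a space of preference parameters $\eta$; for each $\kappa\in\mathcal K$, $\eta\in\mathcal H$ and $\tilde\lambda\in\Lambda\cup\Theta$ there is a function $\tilde Q^\kappa_{\tilde\lambda}(\cdot,\cdot;\eta):\Delta(\Theta)\times\{0,1\}\to\mathbb{R}_+$ (the criterion's acquisition factors for $\tilde\lambda\in\Lambda$, decision factors for $\tilde\lambda\in\Theta$). For inverse temperature $\rho\in\mathbb{R}$, the Boltzmann strategy is $\pi^\kappa_\rho(\tilde\lambda\mid\mu,\nu;\eta)=\exp(-\rho\tilde Q^\kappa_{\tilde\lambda}(\mu,\nu;\eta))/\sum_{\tilde\lambda'\in\Lambda\cup\Theta}\exp(-\rho\tilde Q^\kappa_{\tilde\lambda'}(\mu,\nu;\eta))$. A strategy is thus specified by $(\kappa,\eta,\rho)$, with prior $\mathbb{P}\{\kappa\}\mathbb{P}\{\eta\mid\kappa\}\mathbb{P}\{\rho\}$. Data $\mathcal D=\{(\tilde\lambda_{n,t},\tilde\omega_{n,t+1})_{t=0}^{\tau_n-1}\}_{n=1}^N$ consists of $N$ episodes generated by such a strategy, where $\tilde\lambda_{n,t}$ are the agent's choices and $\tilde\omega_{n,t+1}\in\Omega\cup\{\varnothing\}$ the observed outcomes (with $\varnothing$ for a deadline or terminal step). *)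

From mathcomp Require Import all_boot all_order all_algebra.
From mathcomp Require Import reals sequences exp.
Set Implicit Arguments. Unset Strict Implicit. Unset Printing Implicit Defensive.
Import Order.TTheory GRing.Theory Num.Theory.
Local Open Scope ring_scope.

Section Model.
Variables (R : realType) (Theta Lambda Omega : finType).

(* beliefs mu : Delta(Theta), represented as functions Theta -> R *)
Definition belief := {ffun Theta -> R}.
(* agent choices: acquisitions (inl) or terminating decisions (inr) *)
Definition act := (Lambda + Theta)%type.
(* recorded outcomes: Some omega, or None for the empty outcome (deadline / terminal) *)
Definition obs := option Omega.
Definition step := (act * obs)%type.
(* a strategy: pi(choice | mu, nu) *)
Definition strategy := belief -> bool -> act -> R.

Definition is_dist (T : finType) (f : T -> R) :=
  (forall x, 0 <= f x) /\ \sum_(x : T) f x = 1.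

Variables (p : Theta -> Lambda -> R) (q : Theta -> Lambda -> Omega -> R).

Definition Mupd (l : Lambda) (mu : belief) (w : Omega) : belief :=
  [ffun th => (1 - p th l) * q th l w * mu th /
               \sum_(th' : Theta) (1 - p th' l) * q th' l w * mu th'].

Definition next_belief (mu : belief) (s : step) : belief :=
  match s with
  | (inl l, Some w) => Mupd l mu w
  | _ => mu
  end.

(* Probability, given the latent theta and the agent's current belief mu,
   of the complete remaining episode e (ending at the stopping time)
   when the agent follows strategy pol. *)
Fixpoint traj_lik (pol : strategy) (th : Theta) (mu : belief) (e : seq step) : R :=
  match e with
  | [::] => 0  (* an episode always stops with a decision or a deadline *)
  | (a, o) :: e' =>
      pol mu true a *
      match a, o with
      | inl l, None => p th l * (if nilp e' then 1 else 0)          (* deadline *)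
      | inl l, Some w => (1 - p th l) * q th l w * traj_lik pol th (Mupd l mu w) e'
      | inr _, None => if nilp e' then 1 else 0
      | inr _, Some _ => 0
      end
  end.

Definition episode_lik (pol : strategy) (mu0 : belief) (e : seq step) : R :=
  \sum_(th : Theta) mu0 th * traj_lik pol th mu0 e.

Definition data_lik (N : nat) (pol : strategy) (mu0 : 'I_N -> belief)
    (D : 'I_N -> seq step) : R :=
  \prod_(n < N) episode_lik pol (mu0 n) (D n).

Fixpoint policy_prod (pol : strategy) (mu : belief) (e : seq step) : R :=
  match e with
  | [::] => 1
  | s :: e' => pol mu true s.1 * policy_prod pol (next_belief mu s) e'
  end.

End Model.

Definition boltzmann (R : realType) (Theta Lambda : finType) (K : Type) (d : nat)
    (Q : K -> act Theta Lambda -> belief R Theta -> bool -> 'rV[R]_d -> R)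
    (kappa : K) (eta : 'rV[R]_d) (rho : R) : strategy R Theta Lambda :=
  fun mu nu a =>
    expR (- (rho * Q kappa a mu nu eta)) /
    \sum_(a' : act Theta Lambda) expR (- (rho * Q kappa a' mu nu eta)).

From mathcomp Require Import all_boot all_order all_algebra.
From mathcomp Require Import reals sequences exp.
Set Implicit Arguments. Unset Strict Implicit. Unset Printing Implicit Defensive.
Import Order.TTheory GRing.Theory Num.Theory.
Local Open Scope ring_scope.

(* The likelihood of a trajectory is a product of two kinds of factors: the
   strategy's choice probabilities, which depend only on the recorded choices and
   the beliefs recomputed from the recorded outcomes, and the environment's
   transition probabilities p and q, which depend on the latent theta but not on
   the strategy.  Summing over theta and multiplying over episodes, the dynamics
   contribute a nonnegative constant independent of (kappa, eta, rho). *)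

Section Factorization.
Variables (R : realType) (Theta Lambda Omega : finType).
Variables (p : Theta -> Lambda -> R) (q : Theta -> Lambda -> Omega -> R).

(* [traj_lik] with every strategy factor set to 1. *)
Fixpoint dynamics_lik (th : Theta) (e : seq (step Theta Lambda Omega)) : R :=
  match e with
  | [::] => 0
  | (a, o) :: e' =>
      match a, o with
      | inl l, None => p th l * (if nilp e' then 1 else 0)
      | inl l, Some w => (1 - p th l) * q th l w * dynamics_lik th e'
      | inr _, None => if nilp e' then 1 else 0
      | inr _, Some _ => 0
      end
  end.

Definition episode_dynamics_lik (mu0 : belief R Theta)
    (e : seq (step Theta Lambda Omega)) : R :=
  \sum_(th : Theta) mu0 th * dynamics_lik th e.

Lemma traj_lik_factor (pol : strategy R Theta Lambda) th e mu :
  traj_lik p q pol th mu e = policy_prod p q pol mu e * dynamics_lik th e.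
Proof.
elim: e mu => [|[a o] e IH] mu /=; first by rewrite mulr0.
have stop_factor mu' : policy_prod p q pol mu' e * (if nilp e then 1 else 0) =
                       (if nilp e then 1 else 0 : R).
  by case: e {IH} => [|s e] /=; rewrite ?mulr1 ?mulr0.
case: a => [l|t]; case: o => [w|] /=; rewrite -?mulrA.
- by rewrite IH; congr (_ * _); rewrite [RHS]mulrCA; congr (_ * _); rewrite mulrCA.
- by rewrite (mulrCA (policy_prod _ _ _ _ _)) stop_factor.
- by rewrite !mulr0.
- by rewrite stop_factor.
Qed.

Lemma episode_lik_factor (pol : strategy R Theta Lambda) mu0 e :
  episode_lik p q pol mu0 e = policy_prod p q pol mu0 e * episode_dynamics_lik mu0 e.
Proof.
rewrite /episode_lik /episode_dynamics_lik mulr_sumr; apply: eq_bigr => th _.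
by rewrite traj_lik_factor mulrCA.
Qed.

Lemma data_lik_factor (N : nat) (pol : strategy R Theta Lambda)
    (mu0 : 'I_N -> belief R Theta) (D : 'I_N -> seq (step Theta Lambda Omega)) :
  data_lik p q pol mu0 D =
    (\prod_(n < N) episode_dynamics_lik (mu0 n) (D n)) *
    \prod_(n < N) policy_prod p q pol (mu0 n) (D n).
Proof.
by rewrite /data_lik mulrC -big_split; apply: eq_bigr => n _; rewrite episode_lik_factor.
Qed.

Hypothesis p_prob : forall th l, 0 <= p th l <= 1.
Hypothesis q_ge0 : forall th l w, 0 <= q th l w.

Lemma dynamics_lik_ge0 th e : 0 <= dynamics_lik th e.
Proof.
have nil_ge0 (e' : seq (step Theta Lambda Omega)) : 0 <= (if nilp e' then 1 else 0 : R).
  by case: ifP.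
elim: e => [|[[l|t] [w|]] e IH] //=; have /andP[p_ge0 p_le1] := p_prob th l.
- by rewrite !mulr_ge0 ?subr_ge0.
- exact: mulr_ge0.
Qed.

Lemma episode_dynamics_lik_ge0 (mu0 : belief R Theta) e :
  (forall th, 0 <= mu0 th) -> 0 <= episode_dynamics_lik mu0 e.
Proof.
by move=> mu0_ge0; apply: sumr_ge0 => th _; rewrite mulr_ge0 ?dynamics_lik_ge0.
Qed.

End Factorization.

Theorem proposition6 (R : realType) (Theta Lambda Omega : finType)
  (p : Theta -> Lambda -> R) (q : Theta -> Lambda -> Omega -> R)
  (hp : forall th l, 0 < p th l < 1)
  (hq : forall th l, is_dist (q th l))
  (K : Type) (d : nat)
  (Q : K -> act Theta Lambda -> belief R Theta -> bool -> 'rV[R]_d -> R)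
  (hQ : forall kappa a mu nu eta, 0 <= Q kappa a mu nu eta)
  (Pkappa : K -> R) (Peta : K -> 'rV[R]_d -> R) (Prho : R -> R)
  (hPk : forall kappa, 0 <= Pkappa kappa)
  (hPe : forall kappa eta, 0 <= Peta kappa eta)
  (hPr : forall rho, 0 <= Prho rho)
  (N : nat) (mu0 : 'I_N -> belief R Theta) (hmu0 : forall n, is_dist (mu0 n))
  (D : 'I_N -> seq (step Theta Lambda Omega)) :
  exists c : R, 0 <= c /\
    forall (kappa : K) (eta : 'rV[R]_d) (rho : R),
      Pkappa kappa * Peta kappa eta * Prho rho *
        data_lik p q (boltzmann Q kappa eta rho) mu0 D
      = c * (Pkappa kappa * Peta kappa eta * Prho rho *
             \prod_(n < N) policy_prod p q (boltzmann Q kappa eta rho) (mu0 n) (D n)).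
Proof.
exists (\prod_(n < N) episode_dynamics_lik p q (mu0 n) (D n)); split.
  have p_prob th l : 0 <= p th l <= 1.
    by have /andP[p_gt0 p_lt1] := hp th l; rewrite !ltW.
  have q_ge0 th l w : 0 <= q th l w by have [] := hq th l.
  apply: prodr_ge0 => n _; apply: (episode_dynamics_lik_ge0 p_prob q_ge0) => th.
  by have [] := hmu0 n.
by move=> kappa eta rho; rewrite data_lik_factor mulrCA.
Qed.
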